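(* Let $T=(V,E,w)$ be a tree with positive integer costs. For every decision tree $D$ for $T$ there is an extended strategy function $f$ for $T$ with $\sup\bigcup_{v\in V}f(v)=\mathrm{COST}(D)$, and for every extended strategy function $f$ for $T$ there is a decision tree $D$ for $T$ with $\mathrm{COST}(D)\le \sup\bigcup_{v\in V} f(v)$. Consequently $\mathrm{OPT}(T)=\min_f \sup\bigcup_{v\in V}f(v)$, the minimum over all extended strategy functions $f$ for $T$.
   Context: A decision tree for $T$ is defined recursively: if $|V|=1$ it consists of that single vertex; otherwise one chooses a vertex $q$, and the decision tree is the rooted tree with root $q$ whose children are the roots of decision trees for the connected components of $T-q$. $\mathrm{COST}(D)$ is the maximum over root-to-leaf paths $P$ of $D$ of $\sum_{v\in P}w(v)$, and $\mathrm{OPT}(T)$ is its minimum over decision trees. Intervals are of the form $[a,b)$ with integers $0\le a<b$, and $|[a,b)|=b-a$. For intervals $I=[a,b)$, $I'=[a',b')$ write $I>I'$ (equivalently $I'<I$) iff $a\ge b'$. An extended strategy function for $T$ is a map $f$ assigning to each vertex $v$ an interval $f(v)$ with $|f(v)|\ge w(v)$, such that for any distinct $v_1,v_2$ with $f(v_1)\cap f(v_2)\ne\emptyset$, the path between $v_1$ and $v_2$ contains a vertex $v_3$ with $f(v_3)>f(v_1)$ and $f(v_3)>f(v_2)$. *)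

From Stdlib Require List.
From mathcomp Require Import all_boot.
Set Implicit Arguments. Unset Strict Implicit. Unset Printing Implicit Defensive.

Section Defs.
Variable T : finType.
Variable e : rel T.

Definition simple_graph := irreflexive e /\ symmetric e.

(* A cycle: x :: p a simple e-path with at least 3 vertices, last adjacent to x *)
Definition acyclic :=
  forall (x : T) (p : seq T), path e x p -> uniq (x :: p) -> 2 <= size p ->
    ~~ e (last x p) x.

Definition is_tree :=
  [/\ simple_graph, 0 < #|T|, (forall x y : T, connect e x y) & acyclic].

Definition induced (A : {set T}) : rel T :=
  fun x y => [&& e x y, x \in A & y \in A].

Definition component (A : {set T}) (x : T) : {set T} :=
  [set y in A | connect (induced A) x y].

Definition components (A : {set T}) : {set {set T}} :=
  [set component A x | x in A].

Inductive dtree := DNode of T & seq dtree.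

Inductive is_dt : {set T} -> dtree -> Prop :=
| IsDt (S : {set T}) (q : T) (cs : seq dtree) (Cs : seq {set T}) :
    q \in S ->
    uniq Cs ->
    [set C in Cs] = components (S :\ q) ->
    List.Forall2 is_dt Cs cs ->
    is_dt S (DNode q cs).

Variable w : T -> nat.

Fixpoint cost (D : dtree) : nat :=
  match D with
  | DNode q cs =>
      w q + (fix maxc (l : seq dtree) : nat :=
               match l with [::] => 0 | c :: l' => maxn (cost c) (maxc l') end) cs
  end.

(* Intervals [a,b) with integers 0 <= a < b, represented as pairs (a,b) *)
Definition interval_ok (I : nat * nat) := I.1 < I.2.
Definition ilen (I : nat * nat) := I.2 - I.1.
Definition igt (I I' : nat * nat) := I'.2 <= I.1.
Definition imeet (I I' : nat * nat) := (maxn I.1 I'.1 < minn I.2 I'.2).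

Definition tpath (v1 v2 : T) (p : seq T) :=
  [/\ path e v1 p, uniq (v1 :: p) & last v1 p = v2].

Definition extended_strategy (f : T -> nat * nat) :=
  (forall v, interval_ok (f v) /\ w v <= ilen (f v)) /\
  (forall v1 v2, v1 != v2 -> imeet (f v1) (f v2) ->
     forall p, tpath v1 v2 p ->
       exists2 v3, v3 \in v1 :: p & igt (f v3) (f v1) /\ igt (f v3) (f v2)).

(* sup of the union of the intervals f(v) (as real intervals [a,b)) *)
Definition fsup (f : T -> nat * nat) : nat := \max_(v : T) (f v).2.

End Defs.

Definition is_min (P : nat -> Prop) (n : nat) := P n /\ forall m, P m -> n <= m.

From mathcomp Require Import all_boot zify.
From Stdlib Require Import Classical.
From Stdlib Require Wf_nat.
Set Implicit Arguments. Unset Strict Implicit. Unset Printing Implicit Defensive.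

(* A decision tree with root q and cost M becomes a strategy by giving q the
   interval [M - w q, M) and recursing, with bound M - w q, into the components
   of T - q: intervals of distinct components may meet, but any path between
   them runs through q, whose interval lies above both.  Conversely, from a
   strategy f pick as root the vertex q whose interval reaches highest; the
   separation property forces every other interval below the start of f q, so
   recursing on the components of T - q costs at most (f q).1 below q, hence
   at most (f q).2 = sup f in total.  Both directions only use that the graph
   is symmetric and connected. *)

Section Forall2.
Variables (A : eqType) (B : Type) (P : A -> B -> Prop).

Lemma Forall2_in_r l1 l2 b :
  List.Forall2 P l1 l2 -> List.In b l2 -> exists2 a, a \in l1 & P a b.
Proof.
elim=> //= a b' {}l1 {}l2 Pab _ IH [<-|/IH [a' a'_in Pa'b]].
  by exists a; rewrite ?mem_head.
by exists a'; rewrite // inE a'_in orbT.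
Qed.

Lemma Forall2_in_l l1 l2 a :
  List.Forall2 P l1 l2 -> a \in l1 -> exists2 b, List.In b l2 & P a b.
Proof.
elim=> //= a' b {}l1 {}l2 Pab _ IH; rewrite inE => /orP [/eqP->|/IH [b' b'_in Pab']].
  by exists b; first left.
by exists b'; first right.
Qed.

Lemma Forall2_exists l :
  {in l, forall a, exists b, P a b} -> exists l2, List.Forall2 P l l2.
Proof.
elim: l => [|a l IH] exP; first by exists [::].
have [b Pab] := exP a (mem_head _ _).
have [|l2 Pl2] := IH; first by move=> a' a'_in; apply: exP; rewrite inE a'_in orbT.
by exists (b :: l2); constructor.
Qed.

End Forall2.

Lemma is_min_exists (P : nat -> Prop) : (exists n, P n) -> exists n, is_min P n.
Proof.
move=> exP; have [n [[Pn n_min] _]] :=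
  @Wf_nat.dec_inh_nat_subset_has_unique_least_element P (fun n => classic (P n)) exP.
by exists n; split=> // m /n_min/leP.
Qed.

Lemma imeetC (I J : nat * nat) : imeet I J = imeet J I.
Proof. by rewrite /imeet maxnC minnC. Qed.

Lemma igt_imeet (I J : nat * nat) : igt I J -> imeet I J = false.
Proof. by rewrite /igt /imeet; lia. Qed.

Section Cost.
Variables (T : finType) (w : T -> nat).

Definition children_cost (cs : seq (dtree T)) :=
  foldr (fun c m => maxn (cost w c) m) 0 cs.

Lemma costE q cs : cost w (DNode q cs) = w q + children_cost cs.
Proof. by congr (_ + _); elim: cs => //= c cs ->. Qed.

Lemma children_cost_leP cs B :
  children_cost cs <= B <-> (forall c, List.In c cs -> cost w c <= B).
Proof.
elim: cs => [|c cs IH] /=; first by [].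
rewrite geq_max; split=> [/andP [c_le /IH cs_le] c' [<-|/cs_le]|cs_le] //.
by rewrite cs_le /=; [apply/IH => c' c'_in; apply: cs_le; right | left].
Qed.

End Cost.

Section Components.
Variables (T : finType) (e : rel T).

Definition connectedS (S : {set T}) :=
  forall y z, y \in S -> z \in S -> connect (induced e S) y z.

Lemma induced_path_sub (A : {set T}) x p :
  path (induced e A) x p -> x \in A -> all (mem A) (x :: p).
Proof.
elim: p x => [|y p IH] x /=; first by rewrite andbT.
by case/andP=> /and3P [_ _ yA] yp ->; exact: IH.
Qed.

Lemma path_induced (A : {set T}) x p :
  path e x p -> all (mem A) (x :: p) -> path (induced e A) x p.
Proof.
elim: p x => [|y p IH] x //= /andP [exy yp] /and3P [xA yA pA].
by rewrite /induced exy xA yA IH //= yA.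
Qed.

Lemma connect_tpath (A : {set T}) x y : x \in A -> connect (induced e A) x y ->
  exists p, tpath e x y p /\ all (mem A) (x :: p).
Proof.
move=> xA /connectP [p xp ->]; case: (shortenP xp) => p' xp' p'_uniq _.
exists p'; split; last exact: induced_path_sub xp' xA.
by split=> //; apply: sub_path xp' => a b /and3P [].
Qed.

Lemma mem_component (A : {set T}) x : x \in A -> x \in component e A x.
Proof. by move=> xA; rewrite inE xA connect0. Qed.

Lemma component_sub (A : {set T}) x : component e A x \subset A.
Proof. by apply/subsetP => y; rewrite inE => /andP []. Qed.

Lemma connectedS_setT : (forall x y, connect e x y) -> connectedS [set: T].
Proof.
move=> e_conn y z _ _; rewrite (@eq_connect _ _ e) // => a b.
by rewrite /induced !in_setT !andbT.
Qed.

Lemma component_card_lt (S : {set T}) q x :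
  q \in S -> #|component e (S :\ q) x| < #|S|.
Proof.
move=> qS; apply: leq_ltn_trans (subset_leq_card (component_sub _ _)) _.
by rewrite (cardsD1 q S) qS.
Qed.

Hypothesis e_sym : symmetric e.

Lemma induced_connect_sym (A : {set T}) : connect_sym (induced e A).
Proof.
by apply: sym_connect_sym => x y; rewrite /induced e_sym [(x \in A) && _]andbC.
Qed.

Lemma connect_component (A : {set T}) x y :
  connect (induced e A) x y -> component e A x = component e A y.
Proof.
by move=> xy; apply/setP => z; rewrite !inE (same_connect (induced_connect_sym A) xy).
Qed.

Lemma component_path (A : {set T}) x p : path e x p -> all (mem A) (x :: p) ->
  {in x :: p, forall u, component e A u = component e A x}.
Proof.
move=> xp pA u u_in; apply/esym/connect_component.
exact: path_connect (path_induced xp pA) u u_in.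
Qed.

Lemma component_connected (A : {set T}) x : x \in A -> connectedS (component e A x).
Proof.
move=> xA; set K := component e A x.
have K_path p u : u \in K -> path (induced e A) u p ->
    connect (induced e K) u (last u p).
  elim: p u => [|z p IH] u uK /=; first by rewrite connect0.
  case/andP=> uz zp; have /and3P [euz _ zA] := uz.
  have zK : z \in K.
    by move: uK; rewrite !inE zA => /andP [_ /connect_trans ->] //; exact: connect1.
  by apply: connect_trans (IH z zK zp); apply: connect1; rewrite /induced euz uK.
have from_x y : y \in K -> connect (induced e K) x y.
  by rewrite inE => /andP [_ /connectP [p xp ->]]; apply: K_path; rewrite ?mem_component.
move=> y z yK zK; apply: (connect_trans (y := x)); last exact: from_x.
by rewrite induced_connect_sym; exact: from_x.
Qed.

End Components.

Lemma fsupE (T : finType) (f : T -> nat * nat) :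
  fsup f = \max_(v in [set: T]) (f v).2.
Proof. by apply: eq_bigl => v; rewrite in_setT. Qed.

Section Strategies.
Variables (T : finType) (e : rel T) (w : T -> nat).
Hypothesis e_sym : symmetric e.

Definition separated (f : T -> nat * nat) v1 v2 p :=
  exists2 v3, v3 \in v1 :: p & igt (f v3) (f v1) /\ igt (f v3) (f v2).

Definition strategy_within (S : {set T}) (M : nat) (f : T -> nat * nat) :=
  [/\ {in S, forall v, [/\ interval_ok (f v), w v <= ilen (f v) & (f v).2 <= M]},
      (exists2 r, r \in S & (f r).2 = M)
    & forall v1 v2 p, v1 \in S -> v2 \in S -> v1 != v2 -> imeet (f v1) (f v2) ->
        tpath e v1 v2 p -> all (mem S) (v1 :: p) -> separated f v1 v2 p].

Definition graft (S : {set T}) q M (g : {set T} -> T -> nat * nat) v :=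
  if v == q then (M - w q, M) else g (component e (S :\ q) v) v.

Lemma graft_strategy (S : {set T}) q M g :
  q \in S -> 0 < w q <= M ->
  {in components e (S :\ q), forall C, strategy_within C (M - w q) (g C)} ->
  strategy_within S M (graft S q M g).
Proof.
move=> qS /andP [wq_pos wq_le] g_str; set f := graft S q M g.
have f_q : f q = (M - w q, M) by rewrite /f /graft eqxx.
have f_other v : v != q -> f v = g (component e (S :\ q) v) v.
  by rewrite /f /graft => /negPf ->.
have in_child v : v \in S -> v != q ->
    [/\ interval_ok (f v), w v <= ilen (f v) & (f v).2 <= M - w q].
  move=> vS vq; have vSq : v \in S :\ q by rewrite !inE vq.
  have [g_int _ _] := g_str _ (imset_f _ vSq).
  by rewrite f_other //; exact: g_int (mem_component e vSq).
have below_q v : v \in S -> v != q -> igt (f q) (f v).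
  by move=> vS vq; rewrite /igt f_q; case: (in_child v vS vq).
split.
- move=> v vS; have [->|vq] := eqVneq v q; last first.
    by case: (in_child v vS vq) => *; split=> //; lia.
  by rewrite f_q /interval_ok /ilen /=; split=> //; lia.
- by exists q; rewrite ?f_q.
move=> v1 v2 p v1S v2S v12 meet12 [v1p p_uniq p_last] pS.
have [q_in|q_notin] := boolP (q \in v1 :: p).
  have [v1q|v1q] := eqVneq v1 q.
    by move: meet12; rewrite v1q igt_imeet // below_q // -v1q eq_sym.
  have [v2q|v2q] := eqVneq v2 q.
    by move: meet12; rewrite v2q imeetC igt_imeet // below_q.
  by exists q => //; split; apply: below_q.
have pSq : all (mem (S :\ q)) (v1 :: p).
  apply/allP => u u_in; rewrite !inE [u \in S](allP pS u u_in) andbT.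
  by apply: contraNneq q_notin => <-.
set C := component e (S :\ q) v1.
have comp_p := component_path e_sym v1p pSq.
have f_p u : u \in v1 :: p -> f u = g C u.
  move=> u_in; have uq : u != q by apply: contraNneq q_notin => <-.
  by rewrite f_other // (comp_p u u_in).
have p_C : all (mem C) (v1 :: p).
  apply/allP => u u_in /=; rewrite /C -(comp_p u u_in) mem_component //.
  exact: allP pSq u u_in.
have v2_in : v2 \in v1 :: p by rewrite -p_last mem_last.
have [_ _ g_sep] := g_str C (imset_f _ (allP pSq v1 (mem_head _ _))).
rewrite !f_p ?mem_head // in meet12.
have [v3 v3_in] := g_sep v1 v2 p (allP p_C v1 (mem_head _ _))
  (allP p_C v2 v2_in) v12 meet12 (And3 v1p p_uniq p_last) p_C.
by exists v3; rewrite // !f_p ?mem_head.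
Qed.

Lemma dtree_strategy (S : {set T}) D M :
  (forall v, 0 < w v) -> is_dt e S D -> cost w D <= M ->
  exists f, strategy_within S M f.
Proof.
move=> w_pos; elim: {S}_.+1 {-2}S (ltnSn #|S|) D M => // n IH S0 S0_lt D0 M D0_dt.
case: D0_dt S0_lt => {S0 D0} S q cs Cs qS _ CsE cs_dt.
rewrite ltnS costE => S_le cost_le.
have children C : exists g, C \in components e (S :\ q) ->
    strategy_within C (M - w q) g.
  have [C_comp|] := boolP (C \in components e (S :\ q)); last by exists (fun=> (0, 0)).
  have [|c c_in c_dt] := Forall2_in_l cs_dt (a := C); first by rewrite -CsE inE in C_comp.
  have [||g g_str] := IH C _ c (M - w q) c_dt.
  - by case/imsetP: C_comp => x _ ->; exact: leq_trans (component_card_lt e x qS) S_le.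
  - by have /children_cost_leP /(_ c c_in) := leqnn (children_cost w cs); lia.
  by exists g.
have [g g_str] := fin_all_exists children.
exists (graft S q M g); apply: graft_strategy => //.
by rewrite w_pos /=; lia.
Qed.

Lemma strategy_within_setT M f :
  strategy_within [set: T] M f -> extended_strategy e w f /\ fsup f = M.
Proof.
case=> f_int [r _ f_r] f_sep; split.
  split=> [v|v1 v2 v12 meet12 p p_path]; first by case: (f_int v (in_setT v)).
  by apply: f_sep; rewrite ?in_setT //; apply/allP => u _; rewrite /= in_setT.
apply/eqP; rewrite fsupE eqn_leq -{2}f_r leq_bigmax_cond ?in_setT // andbT.
by apply/bigmax_leqP => v vT; case: (f_int v vT).
Qed.

Lemma dtree_extended_strategy D :
  (forall v, 0 < w v) -> is_dt e [set: T] D ->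
  exists f, extended_strategy e w f /\ fsup f = cost w D.
Proof.
move=> w_pos D_dt; have [f f_str] := dtree_strategy w_pos D_dt (leqnn _).
by exists f; exact: strategy_within_setT.
Qed.

Lemma strategy_top_dominates f (S : {set T}) q v :
  extended_strategy e w f -> connectedS e S -> q \in S ->
  {in S, forall u, (f u).2 <= (f q).2} -> v \in S -> v != q -> (f v).2 <= (f q).1.
Proof.
move=> [f_int f_sep] S_conn qS q_top vS vq; rewrite leqNgt; apply/negP => q_lt_v.
have meet_vq : imeet (f v) (f q).
  by move: (f_int v).1 (f_int q).1 (q_top v vS); rewrite /imeet /interval_ok; lia.
have [p [vqp pS]] := connect_tpath vS (S_conn v q vS qS).
have [u u_in [_ u_q]] := f_sep v q vq meet_vq p vqp.
by move: (f_int u).1 (q_top u (allP pS u u_in)) u_q; rewrite /interval_ok /igt; lia.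
Qed.

Lemma strategy_dtree f (S : {set T}) :
  extended_strategy e w f -> S != set0 -> connectedS e S ->
  exists2 D, is_dt e S D & cost w D <= \max_(v in S) (f v).2.
Proof.
move=> f_str; elim: {S}_.+1 {-2}S (ltnSn #|S|) => // n IH S.
rewrite ltnS => S_le /set0Pn/card_gt0P S_ne S_conn.
have [q qS maxE] := eq_bigmax_cond (fun v => (f v).2) S_ne.
have q_top : {in S, forall u, (f u).2 <= (f q).2}.
  by move=> u uS; rewrite -maxE; exact: leq_bigmax_cond.
set Cs := enum (components e (S :\ q)).
have children : {in Cs, forall C, exists D, is_dt e C D /\ cost w D <= (f q).1}.
  move=> _ /[!mem_enum] /imsetP [x xSq ->].
  have [|||D D_dt D_cost] := IH (component e (S :\ q) x).
  - exact: leq_trans (component_card_lt e x qS) S_le.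
  - by apply/set0Pn; exists x; exact: mem_component.
  - exact: component_connected.
  exists D; split=> //; apply: leq_trans D_cost _; apply/bigmax_leqP => v vC.
  move: (subsetP (component_sub e (S :\ q) x) v vC); rewrite !inE => /andP [vq vS].
  exact: strategy_top_dominates f_str S_conn qS q_top vS vq.
have [cs cs_dt] := Forall2_exists children.
exists (DNode q cs).
  apply: (@IsDt _ _ S q cs Cs) => //; first exact: enum_uniq; first exact: set_enum.
  by apply: List.Forall2_impl cs_dt => C D [].
have cs_cost : children_cost w cs <= (f q).1.
  by apply/children_cost_leP => c /(Forall2_in_r cs_dt) [C _ []].
rewrite costE maxE; case: (f_str.1 q); rewrite /interval_ok /ilen; lia.
Qed.

Lemma extended_strategy_dtree f :
  0 < #|T| -> (forall x y, connect e x y) -> extended_strategy e w f ->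
  exists2 D, is_dt e [set: T] D & cost w D <= fsup f.
Proof.
move=> /card_gt0P [x _] e_conn f_str; rewrite fsupE.
apply: strategy_dtree => //; last exact: connectedS_setT.
by apply/set0Pn; exists x.
Qed.

Lemma extended_strategy_exists : exists f, extended_strategy e w f.
Proof.
pose W := (\max_v w v).+1.
exists (fun v => (enum_rank v * W, (enum_rank v).+1 * W)); split.
  move=> v; rewrite /interval_ok /ilen /= mulSn addnK; split.
    by rewrite -[X in X < _]add0n ltn_add2r.
  exact: leqW (leq_bigmax v).
have block_disj i j : i < j -> imeet (j * W, j.+1 * W) (i * W, i.+1 * W) = false.
  by move=> ij; apply: igt_imeet; rewrite /igt /= leq_mul2r ij orbT.
move=> v1 v2 v12; have : enum_rank v1 != enum_rank v2 by rewrite (inj_eq enum_rank_inj).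
rewrite -val_eqE /=; case: (ltngtP (enum_rank v1) (enum_rank v2)) => // lt12 _.
  by rewrite imeetC block_disj.
by rewrite block_disj.
Qed.

End Strategies.

Theorem mainTheorem10 (T : finType) (e : rel T) (w : T -> nat) :
  is_tree e -> (forall v, 0 < w v) ->
  (forall D, is_dt e [set: T] D ->
     exists f, extended_strategy e w f /\ fsup f = cost w D) /\
  (forall f, extended_strategy e w f ->
     exists2 D, is_dt e [set: T] D & cost w D <= fsup f) /\
  (exists n,
     is_min (fun c => exists2 D, is_dt e [set: T] D & cost w D = c) n /\
     is_min (fun s => exists2 f, extended_strategy e w f & fsup f = s) n).
Proof.
move=> [[_ e_sym] T_ne e_conn _] w_pos.
have dt_strategy := dtree_extended_strategy e_sym w_pos.
have strategy_dt := extended_strategy_dtree (w := w) e_sym T_ne e_conn.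
have [f0 f0_str] := extended_strategy_exists e w.
have [D0 D0_dt _] := strategy_dt f0 f0_str.
have [n [[D D_dt D_n] n_min]] :=
  is_min_exists (ex_intro (fun c => exists2 D, is_dt e [set: T] D & cost w D = c)
    _ (ex_intro2 _ _ D0 D0_dt erefl)).
do 2!split=> //; exists n; split; first by split=> //; exists D.
split=> [|m [f f_str <-]].
  by have [f [f_str f_D]] := dt_strategy D D_dt; exists f; rewrite // f_D.
have [D' D'_dt D'_f] := strategy_dt f f_str.
exact: leq_trans (n_min _ (ex_intro2 _ _ D' D'_dt erefl)) D'_f.
Qed.
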